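(* Let $G=(\mathcal{V},\mathcal{E})$ be a hypergraph, $P$ a pmf on $\mathcal{V}$, and $L\ge1$ an integer. If the subhypergraph $G_P$ of $G$ induced by $P$ is complete multipartite, then $$\max_{\ell\in[L+1]}\frac1\ell\,\theta^{(\ell)}_{L+1}(G,P)=\frac{1}{L+1}I_{L+1}(G,P).$$
   Context: Notation: $[j]=\{1,\dots,j\}$, $[i:j]=\{i,\dots,j\}$; $\log$ base 2. A hypergraph $G=(\mathcal{V},\mathcal{E})$ has finite $\mathcal{V}$ and $\mathcal{E}\subseteq2^{\mathcal{V}}$ with edges of cardinality $\ge2$. An independent set is a vertex subset none of whose subsets is an edge; a hypergraph is complete multipartite if its vertex set has a partition $\{\mathcal{I}_j\}$ into independent sets such that every vertex subset is either an edge or contained in some $\mathcal{I}_j$. $G_P=(\mathcal{V}_P,\mathcal{E}_P)$ with $\mathcal{V}_P=\mathrm{supp}(P)$ and $\mathcal{E}_P$ the edges of $G$ contained in $\mathcal{V}_P$. For $v_{[k]}\in\mathcal{V}^k$, $\sigma(v_{[k]})=\{v_1,\dots,v_k\}$, $P(v_S)=\prod_{j\in S}P(v_j)$. $I_{L+1}(G,P):=-\frac1L\log\sum_{v_{[L+1]}:\sigma(v_{[L+1]})\notin\mathcal{E}}P(v_{[L+1]})$, $\theta^{(L+1)}_{L+1}(G,P):=I_{L+1}(G,P)$, and for $\ell\in[L]$, $\theta^{(\ell)}_{L+1}(G,P):=2I_{L+1}(G,P)+\frac1L\log\sum_{v_{[\ell]}}P(v_{[\ell]})\Big[\sum_{v_{[\ell+1:L+1]}:\sigma(v_{[L+1]})\notin\mathcal{E}}P(v_{[\ell+1:L+1]})\Big]^2$.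 *)

From Stdlib Require Import Reals.
From mathcomp Require Import all_boot.
Set Implicit Arguments. Unset Strict Implicit. Unset Printing Implicit Defensive.

Open Scope R_scope.

Definition log2 (x : R) : R := ln x / ln 2.

Section Hyper.
Variable V : finType.

Definition is_hypergraph (E : {set {set V}}) : Prop :=
  forall e, e \in E -> (2 <= #|e|)%N.

Definition is_pmf (P : V -> R) : Prop :=
  (forall v, 0 <= P v) /\ \big[Rplus/0]_(v : V) P v = 1.

Definition supp (P : V -> R) : {set V} :=
  [set v | if Rlt_dec 0 (P v) then true else false].

Definition induced_edges (E : {set {set V}}) (W : {set V}) : {set {set V}} :=
  [set e in E | e \subset W].

Definition independent (E : {set {set V}}) (S : {set V}) : Prop :=
  forall A : {set V}, A \subset S -> A \notin E.

Definition complete_multipartite (W : {set V}) (E : {set {set V}}) : Prop :=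
  exists Parts : {set {set V}},
    partition Parts W /\
    (forall I, I \in Parts -> independent E I) /\
    (forall A : {set V}, A \subset W ->
       A \in E \/ exists I, I \in Parts /\ A \subset I).

Definition sigma (s : seq V) : {set V} := [set x in s].

Definition prodP (P : V -> R) (s : seq V) : R := \big[Rmult/1]_(x <- s) P x.

Definition I_L1 (E : {set {set V}}) (P : V -> R) (L : nat) : R :=
  - (1 / INR L) *
    log2 (\big[Rplus/0]_(t : (L.+1).-tuple V | sigma t \notin E) prodP P t).

Definition theta (E : {set {set V}}) (P : V -> R) (L l : nat) : R :=
  if (l == L.+1)%N then I_L1 E P L
  else 2 * I_L1 E P L + (1 / INR L) *
    log2 (\big[Rplus/0]_(t1 : l.-tuple V)
            (prodP P t1 *
             (\big[Rplus/0]_(t2 : (L.+1 - l).-tuple V | sigma (t1 ++ t2) \notin E)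
                 prodP P t2) ^ 2)).

Definition max_over_L1 (L : nat) (f : nat -> R) : R :=
  \big[Rmax/f 1%nat]_(1 <= l < L.+2) f l.

End Hyper.

From Pilot Require Import Defs.
From HB Require Import structures.
From Stdlib Require Import Reals Lra.
From mathcomp Require Import all_boot.
(* Reals also exports a [sigma]; re-export ours on top of it. *)
Import Defs.
Set Implicit Arguments. Unset Strict Implicit.
Open Scope R_scope.

(* On the support of P a vertex set is a non-edge exactly when it lies inside
   one part of the multipartition.  Hence, for a nonempty tuple s inside a part
   B, the mass of the length-k completions t of s with s ++ t a non-edge is
   P(B)^k, while the non-edge mass of n-tuples is Q_n = sum_B P(B)^n >= P(B)^n.
   So the sum inside theta^(l) is at most sum_s P(s) P(B_s)^k Q_n^(k/n) =
   Q_n^(1 + k/n) with n = L+1 and k = n - l, i.e. theta^(l) <= (l/n) I_n,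
   with equality for l = n. *)

Lemma RplusA : associative Rplus. Proof. by move=> x y z; rewrite Rplus_assoc. Qed.
Lemma RmultA : associative Rmult. Proof. by move=> x y z; rewrite Rmult_assoc. Qed.
HB.instance Definition _ :=
  Monoid.isComLaw.Build R 0 Rplus RplusA Rplus_comm Rplus_0_l.
HB.instance Definition _ :=
  Monoid.isComLaw.Build R 1 Rmult RmultA Rmult_comm Rmult_1_l.
HB.instance Definition _ := Monoid.isMulLaw.Build R 0 Rmult Rmult_0_l Rmult_0_r.
HB.instance Definition _ :=
  Monoid.isAddLaw.Build R Rmult Rplus Rmult_plus_distr_r Rmult_plus_distr_l.

Lemma log2_le x y : 0 < x -> x <= y -> log2 x <= log2 y.
Proof.
move=> x_gt0 [xy | ->]; last exact: Rle_refl.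
have ln2_gt0 : 0 < ln 2 by rewrite -ln_1; apply: ln_increasing; lra.
apply: Rmult_le_compat_r; first by left; apply: Rinv_0_lt_compat.
by left; apply: ln_increasing.
Qed.

Lemma log2_Rpower x a : log2 (Rpower x a) = a * log2 x.
Proof. by rewrite /log2 /Rpower ln_exp /Rdiv Rmult_assoc. Qed.

Section RealBigops.
Variable I : Type.

Lemma sumR_le (r : seq I) (F G : I -> R) : (forall i, F i <= G i) ->
  \big[Rplus/0]_(i <- r) F i <= \big[Rplus/0]_(i <- r) G i.
Proof. by move=> FG; apply: (big_ind2 Rle) => //; [lra | move=> *; lra]. Qed.

Lemma sumR_ge0 (r : seq I) (Pr : pred I) (F : I -> R) : (forall i, 0 <= F i) ->
  0 <= \big[Rplus/0]_(i <- r | Pr i) F i.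
Proof. by move=> F0; apply: (big_ind (Rle 0)) => //; [lra | move=> *; lra]. Qed.

Lemma prodR_ge0 (r : seq I) (F : I -> R) : (forall i, 0 <= F i) ->
  0 <= \big[Rmult/1]_(i <- r) F i.
Proof.
by move=> F0; apply: (big_ind (Rle 0)) => //; [lra | move=> *; exact: Rmult_le_pos].
Qed.

End RealBigops.

Lemma prodR_gt0 (I : eqType) (r : seq I) (F : I -> R) :
  (forall i, i \in r -> 0 < F i) -> 0 < \big[Rmult/1]_(i <- r) F i.
Proof.
move=> F0; rewrite big_seq.
by apply: (big_ind (Rlt 0)) => //; [lra | move=> *; exact: Rmult_lt_0_compat].
Qed.

Lemma bigRmax_ge (I : eqType) (r : seq I) (F : I -> R) x0 i : i \in r ->
  F i <= \big[Rmax/x0]_(j <- r) F j.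
Proof.
elim: r => // a r IH; rewrite inE big_cons => /orP [/eqP ->|ir].
  exact: Rmax_l.
exact: Rle_trans (IH ir) (Rmax_r _ _).
Qed.

Lemma sumR_ge_term (T : finType) (F : T -> R) i : (forall j, 0 <= F j) ->
  F i <= \big[Rplus/0]_(j : T) F j.
Proof.
move=> F0; rewrite (bigD1 i) //=.
have := sumR_ge0 (index_enum T) (fun j => j != i) F0; lra.
Qed.

Section Tuples.
Variable V : finType.

Lemma big_tuple_cons m (F : seq V -> R) :
  \big[Rplus/0]_(t : m.+1.-tuple V) F t =
  \big[Rplus/0]_(x : V) \big[Rplus/0]_(t : m.-tuple V) F (x :: t).
Proof.
rewrite pair_big /= (reindex (fun p : V * m.-tuple V => [tuple of p.1 :: p.2])) //=.
exists (fun t : m.+1.-tuple V => (thead t, [tuple of behead t])).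
  by move=> [x t] _ /=; congr pair; apply: val_inj.
by move=> t _; rewrite [in RHS](tuple_eta t).
Qed.

Lemma big_tuple0 (F : seq V -> R) :
  \big[Rplus/0]_(t : 0.-tuple V) F t = F [::].
Proof. by rewrite (big_pred1 [tuple]) // => t; apply/esym/eqP; apply: tuple0. Qed.

Lemma big_tuple_cat m1 m2 (F : seq V -> R) :
  \big[Rplus/0]_(t : (m1 + m2).-tuple V) F t =
  \big[Rplus/0]_(t1 : m1.-tuple V) \big[Rplus/0]_(t2 : m2.-tuple V) F (t1 ++ t2).
Proof.
elim: m1 F => [|m1 IH] F.
  by rewrite (big_tuple0 (fun s => \big[Rplus/0]_(t2 : m2.-tuple V) F (s ++ t2))).
rewrite big_tuple_cons.
rewrite (big_tuple_cons m1 (fun s => \big[Rplus/0]_(t2 : m2.-tuple V) F (s ++ t2))).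
by apply: eq_bigr => x _; rewrite (IH (fun s => F (x :: s))).
Qed.

Lemma prodP_cat (F : V -> R) s1 s2 : prodP F (s1 ++ s2) = prodP F s1 * prodP F s2.
Proof. by rewrite /prodP big_cat. Qed.

Lemma prodP_eq0 (F : V -> R) s x : x \in s -> F x = 0 -> prodP F s = 0.
Proof.
move=> xs Fx0; rewrite /prodP (big_rem x xs) /= Fx0; exact: Rmult_0_l.
Qed.

Lemma sum_prodP_tuple m (F : V -> R) :
  \big[Rplus/0]_(t : m.-tuple V) prodP F t = (\big[Rplus/0]_(v : V) F v) ^ m.
Proof.
elim: m => [|m IH]; first by rewrite (big_tuple0 (prodP F)) /prodP big_nil.
rewrite big_tuple_cons /= -IH big_distrl /=.
apply: eq_bigr => x _; rewrite big_distrr /=.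
by apply: eq_bigr => t _; rewrite /prodP big_cons.
Qed.

End Tuples.

Section Masses.
Variables (V : finType) (E : {set {set V}}) (P : V -> R).

Definition non_edge_mass n :=
  \big[Rplus/0]_(t : n.-tuple V | sigma t \notin E) prodP P t.

Definition completion_mass k (s : seq V) :=
  \big[Rplus/0]_(t : k.-tuple V | sigma (s ++ t) \notin E) prodP P t.

Definition theta_sum l k :=
  \big[Rplus/0]_(t : l.-tuple V) (prodP P t * completion_mass k t ^ 2).

Definition restrictP (A : {set V}) v := if v \in A then P v else 0.

Definition mass (A : {set V}) := \big[Rplus/0]_(v : V) restrictP A v.

Lemma non_edge_mass_cat l k :
  non_edge_mass (l + k) =
  \big[Rplus/0]_(t : l.-tuple V) (prodP P t * completion_mass k t).
Proof.
rewrite /non_edge_mass big_mkcond.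
rewrite (big_tuple_cat l k (fun s => if sigma s \notin E then prodP P s else 0)).
apply: eq_bigr => t1 _; rewrite big_distrr [in RHS]big_mkcond.
by apply: eq_bigr => t2 _ /=; rewrite prodP_cat; case: ifP; rewrite ?Rmult_0_r.
Qed.

Hypothesis P_ge0 : forall v, 0 <= P v.

Lemma prodP_ge0 s : 0 <= prodP P s.
Proof. exact: prodR_ge0. Qed.

Lemma restrictP_ge0 A v : 0 <= restrictP A v.
Proof. by rewrite /restrictP; case: ifP => _; [exact: P_ge0 | lra]. Qed.

Lemma completion_mass_ge0 k s : 0 <= completion_mass k s.
Proof. by apply: sumR_ge0 => t; apply: prodP_ge0. Qed.

Lemma suppP x : x \in supp P <-> 0 < P x.
Proof. by rewrite /supp inE; case: Rlt_dec. Qed.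

Lemma notin_supp_eq0 x : x \notin supp P -> P x = 0.
Proof.
move=> xNs; have := P_ge0 x.
have : ~ 0 < P x by move/suppP; rewrite (negbTE xNs).
lra.
Qed.

Lemma supp_neq0 : \big[Rplus/0]_(v : V) P v = 1 -> exists x, x \in supp P.
Proof.
move=> sum1; case: (pickP (mem (supp P))) => [x xs | noneP]; first by exists x.
move: sum1; rewrite big1 => [|v _]; first lra.
by apply: notin_supp_eq0; apply/negbT; exact: noneP.
Qed.

Variable Parts : {set {set V}}.
Hypothesis Parts_partition : partition Parts (supp P).
Hypothesis Parts_independent :
  forall I, I \in Parts -> independent (induced_edges E (supp P)) I.
Hypothesis Parts_complete : forall A : {set V}, A \subset supp P ->
  A \in induced_edges E (supp P) \/ exists I, I \in Parts /\ A \subset I.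

Let part := pblock Parts.

Lemma cover_Parts : cover Parts = supp P.
Proof. by case/and3P: Parts_partition => /eqP. Qed.

Lemma part_mem x : x \in supp P -> part x \in Parts.
Proof. by move=> xs; apply: pblock_mem; rewrite cover_Parts. Qed.

Lemma mem_part x : x \in supp P -> x \in part x.
Proof. by move=> xs; rewrite mem_pblock cover_Parts. Qed.

Lemma sub_part_non_edge (A I : {set V}) : I \in Parts -> A \subset I -> A \notin E.
Proof.
move=> IP AI; apply/negP => AE.
have Is : I \subset supp P by rewrite -cover_Parts; apply: bigcup_sup.
have := Parts_independent IP AI.
by rewrite /induced_edges inE AE (subset_trans AI Is).
Qed.

Lemma non_edge_sub_part (A : {set V}) : A \subset supp P -> A \notin E ->
  exists I, I \in Parts /\ A \subset I.
Proof.
move=> As AnE; case: (Parts_complete As) => // AE.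
by move: AE; rewrite /induced_edges inE (negbTE AnE).
Qed.

Lemma mass_part_gt0 x : x \in supp P -> 0 < mass (part x).
Proof.
move=> xs; apply: Rlt_le_trans (sumR_ge_term x (restrictP_ge0 (part x))).
by rewrite /restrictP mem_part //; apply/suppP.
Qed.

(* Parts are independent, so every tuple inside the part of x is a non-edge. *)
Lemma mass_part_pow_le x k (s : seq V) : x \in supp P -> all (mem (part x)) s ->
  mass (part x) ^ k <= completion_mass k s.
Proof.
move=> xs /allP sB; rewrite -sum_prodP_tuple /completion_mass [X in _ <= X]big_mkcond.
apply: sumR_le => t /=.
case: (boolP (all (mem (part x)) t)) => [/allP tB | /allPn [y yt yNB]].
  have stB : sigma (s ++ t) \subset part x.
    by apply/subsetP => y; rewrite inE mem_cat => /orP [/sB | /tB].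
  rewrite (sub_part_non_edge (part_mem xs) stB); right.
  by apply: eq_big_seq => y /tB /= yB; rewrite /restrictP yB.
rewrite (prodP_eq0 (x := y)) //; last by rewrite /restrictP ifN.
by case: ifP => _; [exact: prodP_ge0 | lra].
Qed.

(* By completeness a non-edge inside the support lies in a single part, which
   must be the part of x. *)
Lemma completion_mass_le x k (s : seq V) : x \in s -> all (mem (supp P)) s ->
  completion_mass k s <= mass (part x) ^ k.
Proof.
move=> xs /allP ss; rewrite -sum_prodP_tuple /completion_mass [X in X <= _]big_mkcond.
apply: sumR_le => t /=; case: ifP => stNE; last exact: prodR_ge0 (restrictP_ge0 _).
case: (boolP (all (mem (supp P)) t)) => [/allP ts | /allPn [y yt yNs]].
  have sts : sigma (s ++ t) \subset supp P.
    by apply/subsetP => y; rewrite inE mem_cat => /orP [/ss | /ts].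
  have [I [IP stI]] := non_edge_sub_part sts stNE.
  have xI : x \in I by apply: (subsetP stI); rewrite inE mem_cat xs.
  have partxE : part x = I.
    by apply: def_pblock => //; case/and3P: Parts_partition.
  right; apply: eq_big_seq => y yt /=.
  have yI : y \in I by apply: (subsetP stI); rewrite inE mem_cat yt orbT.
  by rewrite /restrictP partxE yI.
rewrite (prodP_eq0 (x := y)) //; last exact: notin_supp_eq0.
exact: prodR_ge0 (restrictP_ge0 _).
Qed.

Lemma non_edge_mass_gt0 x n : x \in supp P -> 0 < non_edge_mass n.
Proof.
move=> xs; apply: Rlt_le_trans (mass_part_pow_le n (s := [::]) xs isT).
exact: pow_lt (mass_part_gt0 xs).
Qed.

Lemma mass_part_pow_le_Rpower x n k : x \in supp P -> (0 < n)%N ->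
  mass (part x) ^ k <= Rpower (non_edge_mass n) (INR k / INR n).
Proof.
move=> xs n_gt0; set m := mass (part x); have m_gt0 : 0 < m := mass_part_gt0 xs.
have nR_gt0 : 0 < INR n by apply: lt_0_INR; apply/ltP.
have m_root : m = Rpower (m ^ n) (/ INR n).
  by rewrite -Rpower_pow // Rpower_mult Rinv_r ?Rpower_1 //; lra.
rewrite -Rpower_pow // {1}m_root /Rdiv (Rmult_comm (INR k)) -Rpower_mult.
apply: Rle_Rpower_l; first exact: pos_INR.
split; first exact: exp_pos.
apply: Rle_Rpower_l; first by left; apply: Rinv_0_lt_compat.
split; first exact: pow_lt.
exact: (mass_part_pow_le n (s := [::]) xs isT).
Qed.

Lemma completion_mass_le_Rpower k (s : seq V) : s != [::] ->
  all (mem (supp P)) s ->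
  completion_mass k s <=
    Rpower (non_edge_mass (size s + k)) (INR k / INR (size s + k)).
Proof.
case: s => // x s _ ss; apply: Rle_trans (completion_mass_le k (mem_head x s) ss) _.
by apply: mass_part_pow_le_Rpower; [exact: (allP ss) (mem_head x s) |].
Qed.

Lemma theta_sum_le x l k : x \in supp P -> (0 < l)%N ->
  theta_sum l k <= Rpower (non_edge_mass (l + k)) (1 + INR k / INR (l + k)).
Proof.
move=> xs l_gt0; have Q_gt0 := non_edge_mass_gt0 (l + k) xs.
rewrite Rpower_plus Rpower_1 // [X in _ <= X * _]non_edge_mass_cat big_distrl.
apply: sumR_le => t /=.
have Pcm_ge0 := Rmult_le_pos _ _ (prodP_ge0 t) (completion_mass_ge0 k t).
case: (boolP (all (mem (supp P)) t)) => [ts | /allPn [y yt yNs]]; last first.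
  by rewrite (prodP_eq0 yt (notin_supp_eq0 yNs)) !Rmult_0_l; lra.
have t_neq0 : tval t != [::] by rewrite -size_eq0 size_tuple -lt0n.
have := completion_mass_le_Rpower k t_neq0 ts; rewrite size_tuple.
by nra.
Qed.

Lemma theta_sum_gt0 x l k : x \in supp P -> 0 < theta_sum l k.
Proof.
move=> xs; pose t := [tuple of nseq l x].
have t_part : all (mem (part x)) t.
  by apply/allP => y /nseqP [-> _]; exact: mem_part.
have Pt_gt0 : 0 < prodP P t by apply: prodR_gt0 => y /nseqP [-> _]; apply/suppP.
have cm_gt0 : 0 < completion_mass k t.
  exact: Rlt_le_trans (pow_lt _ k (mass_part_gt0 xs)) (mass_part_pow_le k xs t_part).
rewrite /theta_sum; apply: Rlt_le_trans (sumR_ge_term t _); last first.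
  by move=> u; apply: Rmult_le_pos (prodP_ge0 u) (pow2_ge_0 _).
by apply: Rmult_lt_0_compat => //; apply: pow_lt.
Qed.

Lemma theta_le_I x L l : x \in supp P -> (1 <= L)%N -> (1 <= l <= L.+1)%N ->
  theta E P L l <= INR l / INR L.+1 * I_L1 E P L.
Proof.
move=> xs L_gt0 /andP [l_gt0 l_le]; rewrite /theta.
have nR_gt0 : 0 < INR L.+1 by apply: lt_0_INR; apply/ltP.
case: eqP => [-> | _]; first by rewrite /Rdiv Rinv_r ?Rmult_1_l; [exact: Rle_refl | lra].
set k := (L.+1 - l)%N; have n_eq : (l + k)%N = L.+1 by rewrite subnKC.
have kR : INR k = INR L.+1 - INR l by rewrite -n_eq plus_INR; lra.
have S_le := theta_sum_le k xs l_gt0; rewrite n_eq in S_le.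
have log_S_le := log2_le (theta_sum_gt0 l k xs) S_le.
rewrite log2_Rpower kR in log_S_le.
have uR_gt0 : 0 < 1 / INR L by apply: Rdiv_lt_0_compat; [lra | apply: lt_0_INR; apply/ltP].
change (2 * (- (1 / INR L) * log2 (non_edge_mass L.+1)) +
        1 / INR L * log2 (theta_sum l k) <=
        INR l / INR L.+1 * (- (1 / INR L) * log2 (non_edge_mass L.+1))).
have exponentE : 1 + (INR L.+1 - INR l) / INR L.+1 = 2 - INR l / INR L.+1.
  by field; lra.
rewrite exponentE in log_S_le.
by nra.
Qed.

Lemma scaled_theta_le x L l : x \in supp P -> (1 <= L)%N -> (1 <= l <= L.+1)%N ->
  1 / INR l * theta E P L l <= 1 / INR L.+1 * I_L1 E P L.
Proof.
move=> xs L_gt0 l_range; have /andP [l_gt0 _] := l_range.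
have lR_gt0 : 0 < INR l by apply: lt_0_INR; apply/ltP.
have nR_gt0 : 0 < INR L.+1 by apply: lt_0_INR; apply/ltP.
apply: Rle_trans (Rmult_le_compat_l _ _ _ _ (theta_le_I xs L_gt0 l_range)) _.
  by left; apply: Rdiv_lt_0_compat; lra.
by right; field; lra.
Qed.

End Masses.

Unset Implicit Arguments.

Theorem mainTheorem8 (V : finType) (E : {set {set V}}) (P : V -> R) (L : nat) :
  is_hypergraph E ->
  is_pmf P ->
  (1 <= L)%N ->
  complete_multipartite (supp P) (induced_edges E (supp P)) ->
  max_over_L1 L (fun l => (1 / INR l) * theta E P L l)
  = (1 / INR L.+1) * I_L1 E P L.
Proof.
move=> _ [P_ge0 sumP1] L_gt0 [Parts [Parts_partition [Parts_indep Parts_compl]]].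
have [x xs] := supp_neq0 P_ge0 sumP1.
have theta_le :=
  scaled_theta_le P_ge0 Parts_partition Parts_indep Parts_compl xs L_gt0.
apply: Rle_antisym.
  rewrite /max_over_L1 big_seq.
  apply: (big_ind (fun y => y <= _)) => [|y z|l]; first exact: theta_le.
    exact: Rmax_lub.
  by rewrite mem_index_iota; apply: theta_le.
have -> : 1 / INR L.+1 * I_L1 E P L = 1 / INR L.+1 * theta E P L L.+1.
  by rewrite /theta eqxx.
by apply: (bigRmax_ge (fun l => _)); rewrite mem_index_iota ltnSn.
Qed.
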